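(* Let $A\colon X\to Y$ be a compact linear operator between separable Hilbert spaces with infinite-dimensional range, where $X=L^2(\mathcal{M})$, with singular value decomposition $Ax=\sum_{n=1}^\infty\sigma_n\langle x,v_n\rangle_X u_n$. Let $(c_n)_{n\in\mathbb{N}}$ be real numbers with $c_n\ge c_0>0$ for all $n$, and for $\alpha>0$ let $T^c_\alpha y=\sum_{n=1}^\infty\frac{\sigma_n}{\sigma_n^2+\alpha c_n}\langle y,u_n\rangle_Y v_n$. Let $$U=\Big\{y\in Y:\ \sum_{n=1}^\infty\frac{|\langle y,u_n\rangle_Y|}{\sigma_n}\|v_n\|_{L^\infty(\mathcal{M})}<\infty\Big\}.$$ Then for every $y\in U$, $$\|A^\dagger y-T^c_\alpha y\|_{L^\infty(\mathcal{M})}\to 0\qquad\text{as }\alpha\to0.$$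
   Context: $\mathcal{M}$ is a measure space; $\|v_n\|_{L^\infty(\mathcal{M})}$ may be $+\infty$ (with the usual convention $0\cdot\infty=0$ in the defining sum of $U$). The SVD consists of orthonormal systems $(u_n)$ in $Y$ and $(v_n)$ in $X$ and a non-increasing sequence $(\sigma_n)$ of positive reals with $\sigma_n\to0$. The pseudoinverse is $A^\dagger y=\sum_{n}\sigma_n^{-1}\langle y,u_n\rangle_Y v_n$ for $y$ with $\sum_n\sigma_n^{-2}|\langle y,u_n\rangle_Y|^2<\infty$. *)

From HB Require Import structures.
From mathcomp Require Import all_boot all_order all_algebra.
From mathcomp Require Import all_classical all_reals all_analysis.
Set Implicit Arguments. Unset Strict Implicit. Unset Printing Implicit Defensive.
Import Order.TTheory GRing.Theory Num.Theory.
Import numFieldNormedType.Exports.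
Local Open Scope classical_set_scope.
Local Open Scope ring_scope.

Definition inner_product_on (R : realType) (Y : normedModType R)
    (ip : Y -> Y -> R) : Prop :=
  [/\ (forall (a : R) (x y z : Y), ip (a *: x + y) z = a * ip x z + ip y z),
      (forall x y : Y, ip x y = ip y x) &
      (forall y : Y, ip y y = `|y| ^+ 2)].

Definition separable_space (T : topologicalType) : Prop :=
  exists D : set T, countable D /\ closure D = setT.

Definition is_L2 d (M : measurableType d) (R : realType)
    (mu : {measure set M -> \bar R}) (f : M -> R) : Prop :=
  measurable_fun setT f /\ (\int[mu]_x ((f x) ^+ 2)%:E < +oo)%E.

Definition L2ip d (M : measurableType d) (R : realType)
    (mu : {measure set M -> \bar R}) (f g : M -> R) : R :=
  Rintegral mu setT (fun x => f x * g x).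

Definition L2_orthonormal d (M : measurableType d) (R : realType)
    (mu : {measure set M -> \bar R}) (v : nat -> M -> R) : Prop :=
  (forall n, is_L2 mu (v n)) /\
  (forall n m, L2ip mu (v n) (v m) = (n == m)%:R).

Definition ip_orthonormal (R : realType) (Y : Type) (ip : Y -> Y -> R)
    (u : nat -> Y) : Prop :=
  forall n m, ip (u n) (u m) = (n == m)%:R.

Definition is_L2_series d (M : measurableType d) (R : realType)
    (mu : {measure set M -> \bar R}) (v : nat -> M -> R) (b : nat -> R)
    (F : M -> R) : Prop :=
  is_L2 mu F /\
  ((fun N => \int[mu]_x (((F x - \sum_(n < N) b n * v n x) ^+ 2)%:E))
     @ \oo --> 0%E)%E.

Definition Linf_norm d (M : measurableType d) (R : realType)
    (mu : {measure set M -> \bar R}) (f : M -> R) : \bar R :=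
  Lnorm mu +oo%E (EFin \o f).

From HB Require Import structures.
From mathcomp Require Import all_boot all_order all_algebra.
From mathcomp Require Import all_classical all_reals all_analysis.
From mathcomp Require Import ess_sup_inf measurable_realfun ring lra.
Import Order.TTheory GRing.Theory Num.Theory.
Import numFieldNormedType.Exports.
Local Open Scope classical_set_scope.
Local Open Scope ring_scope.

(* Write b_n = <y, u_n> / sigma_n.  The coefficients of A^dagger y - T^c_alpha y are
   e_n(alpha) b_n with the filter defect e_n(alpha) = alpha c_n / (sigma_n^2 + alpha c_n),
   which lies in [0, 1] and is at most alpha c_n / sigma_n^2.  As y is in U, the majorants
   t_n = |b_n| ||v_n||_oo are summable, so the partial sums of the difference are bounded
   a.e. by alpha * sum_(n < K) c_n t_n / sigma_n^2 + sum_(n >= K) t_n: small for K large,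
   then alpha small.  The L^2 limits of the partial sums inherit such an a.e. bound, since
   by Markov's inequality almost every point has partial sums arbitrarily close to both
   limits. *)

Section ae_bounds.
Context {d} {M : measurableType d} {R : realType} (mu : {measure set M -> \bar R}).

Lemma ae_exists_lt_of_integral_cvg0 (g : nat -> M -> R) (a : R) : 0 < a ->
  (forall N, measurable_fun setT (g N)) -> (forall N x, 0 <= g N x) ->
  ((fun N => \int[mu]_x (g N x)%:E) @ \oo --> 0)%E ->
  \forall x \ae mu, exists N, g N x < a.
Proof.
move=> a0 mg g0 cg.
pose W N := setT `&` [set x | a%:E <= `|(g N x)%:E|]%E.
have mgE N : measurable_fun setT (EFin \o g N) by exact/measurable_EFinP.
have mW N : measurable (W N).
  by apply: emeasurable_fun_c_infty => //; exact: measurableT_comp (mgE N).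
have W0 : mu (\bigcap_N W N) = 0%E.
  apply/eqP; rewrite eq_le measure_ge0 andbT.
  rewrite -(@pmule_rle0 _ a%:E) ?lte_fin //; apply: (cvge_to_ge cg).
  apply: nearW => N; apply: (@le_trans _ _ (a%:E * mu (W N))%E).
    apply: lee_wpmul2l; first by rewrite lee_fin ltW.
    apply: le_measure; rewrite ?inE //; first exact: bigcapT_measurable.
    by move=> x Wx; exact: Wx N I.
  apply: le_trans (le_integral_abse mu measurableT (mgE N) a0) _.
  by rewrite (eq_integral (fun x => (g N x)%:E)) // => x _;
    rewrite gee0_abs ?lee_fin.
exists (\bigcap_N W N); split => //; first exact: bigcapT_measurable.
move=> x /= /forallNP noN N _; split => //=.
by rewrite lee_fin ger0_norm // leNgt; apply/negP/noN.
Qed.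

Lemma L2_limits_ae_close (F G : M -> R) (S T : nat -> M -> R) (r delta : R) :
  0 < delta ->
  measurable_fun setT F -> measurable_fun setT G ->
  (forall N, measurable_fun setT (S N)) -> (forall N, measurable_fun setT (T N)) ->
  ((fun N => \int[mu]_x (((F x - S N x) ^+ 2)%:E)) @ \oo --> 0)%E ->
  ((fun N => \int[mu]_x (((G x - T N x) ^+ 2)%:E)) @ \oo --> 0)%E ->
  (\forall x \ae mu, forall N, `|S N x - T N x| <= r) ->
  \forall x \ae mu, `|F x - G x| <= r + delta.
Proof.
move=> delta0 mF mG mS mT cF cG hST.
pose g N x := (F x - S N x) ^+ 2 + (G x - T N x) ^+ 2.
have mg N : measurable_fun setT (g N).
  by apply: measurable_funD; apply: measurable_funX; exact: measurable_funB.
have g0 N x : 0 <= g N x by rewrite addr_ge0 ?sqr_ge0.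
have msq (h k : M -> R) : measurable_fun setT h -> measurable_fun setT k ->
    measurable_fun setT (fun x => ((h x - k x) ^+ 2)%:E).
  by move=> mh mk; apply/measurable_EFinP; apply: measurable_funX; exact: measurable_funB.
have cg : ((fun N => \int[mu]_x (g N x)%:E) @ \oo --> 0)%E.
  rewrite -[0%E]adde0; under eq_fun => N.
    rewrite (eq_integral _ _ (fun x _ => EFinD _ _)) ge0_integralD //;
      try by [move=> x _; rewrite lee_fin sqr_ge0 | exact: msq].
    over.
  exact: cvgeD.
have hdelta : 0 < (delta / 2) ^+ 2 by rewrite exprn_gt0 // divr_gt0.
apply: filterS2 hST (ae_exists_lt_of_integral_cvg0 _ _ hdelta mg g0 cg).
move=> x hx [N hN].
have small (z w : R) : z ^+ 2 + w ^+ 2 < (delta / 2) ^+ 2 -> `|z| < delta / 2.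
  move=> zw; rewrite -ltr_sqr ?nnegrE ?normr_ge0 ?divr_ge0 ?ltW //.
  by rewrite real_normK ?num_real //; apply: le_lt_trans zw; rewrite lerDl sqr_ge0.
have hF : `|F x - S N x| < delta / 2 by exact: small hN.
have hG : `|G x - T N x| < delta / 2 by apply: (small _ (F x - S N x)); rewrite addrC.
have hS := hx N.
have -> : F x - G x = (F x - S N x) + (S N x - T N x) - (G x - T N x) by ring.
apply: le_trans (ler_normB _ _) _; apply: le_trans (lerD (ler_normD _ _) (lexx _)) _.
lra.
Qed.

Lemma Linf_norm_ae_ge (f : M -> R) :
  \forall x \ae mu, (`|f x|%:E <= Linf_norm mu f)%E.
Proof.
rewrite /Linf_norm unlock /=; case: ifPn => [_|mu0].
  by apply: filterS (ess_sup_ge mu (abse \o (EFin \o f))) => x.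
exists setT; split => //.
by apply/eqP; rewrite eq_le measure_ge0 andbT leNgt.
Qed.

Lemma Linf_norm_le (f : M -> R) (r : R) : 0 <= r ->
  (\forall x \ae mu, `|f x| <= r) -> (Linf_norm mu f <= r%:E)%E.
Proof.
move=> r0 fr; rewrite /Linf_norm unlock /=; case: ifPn => _; last by rewrite lee_fin.
by apply/ess_supP; apply: filterS fr => x; rewrite /= lee_fin.
Qed.

End ae_bounds.

Lemma nneseries_tail_le {R : realType} (t : nat -> R) (eps : R) :
  (forall n, 0 <= t n) -> (\sum_(0 <= n <oo) (t n)%:E < +oo)%E -> 0 < eps ->
  exists K, forall N, \sum_(K <= n < N) t n <= eps.
Proof.
move=> t0 tfin eps0.
have tail0 := nneseries_tail_cvg tfin (fun n _ => t0 n).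
have [K _ hK] := tail0 _ (nbhs_open_ereal_lt (f := fun=> eps) eps0).
exists K => N; rewrite -lee_fin -sumEFin.
apply: le_trans (nneseries_lim_ge _ _) (ltW (hK K (leqnn K))) => n _ _.
by rewrite lee_fin.
Qed.

Lemma sum_damped_le {R : numDomainType} (e t q : nat -> R) (K N : nat) :
  (forall n, 0 <= t n) -> (forall n, 0 <= e n <= 1) -> (forall n, e n * t n <= q n) ->
  \sum_(n < N) e n * t n <= \sum_(n < K) q n + \sum_(K <= n < N) t n.
Proof.
move=> t0 e01 etq.
have et0 n : 0 <= e n * t n by rewrite mulr_ge0 // (andP (e01 n)).1.
have q0 n : 0 <= q n by exact: le_trans (etq n).
rewrite -(big_mkord xpredT (fun n => e n * t n)) -(big_mkord xpredT q).
have [NK|KN] := leqP N K.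
  rewrite [\sum_(K <= n < N) _]big_geq // addr0.
  rewrite [X in _ <= X](big_cat_nat (n:=N)) //= -[X in X <= _]addr0.
  by apply: lerD; [exact: ler_sum | exact: sumr_ge0].
rewrite [X in X <= _](big_cat_nat (n:=K)) ?(ltnW KN) //=.
apply: lerD; first exact: ler_sum.
by apply: ler_sum => n _; rewrite ler_piMl // (andP (e01 n)).2.
Qed.

Lemma cvge0_near_le {T : Type} {F : set_system T} {FF : Filter F}
    {R : realType} (f : T -> \bar R) :
  (forall x, 0 <= f x)%E ->
  (forall eps : R, 0 < eps -> \forall x \near F, (f x <= eps%:E)%E) ->
  (f @ F --> 0)%E.
Proof.
move=> f0 fle; apply/fine_cvgP; split.
  by apply: filterS (fle 1 ltr01) => x fx; rewrite ge0_fin_numE // (le_lt_trans fx) ?ltry.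
apply/cvgrPdist_le => eps eps0; apply: filterS (fle eps eps0) => x fx /=.
have fxfin : f x \is a fin_num by rewrite ge0_fin_numE // (le_lt_trans fx) ?ltry.
by rewrite sub0r normrN ger0_norm ?fine_ge0 // -lee_fin fineK.
Qed.

Section damped_series.
Context {d} {M : measurableType d} {R : realType} (mu : {measure set M -> \bar R}).
Variables (v : nat -> M -> R) (b k : nat -> R) (e : R -> nat -> R).
Hypothesis mv : forall n, measurable_fun setT (v n).
Hypothesis e01 : forall a n, 0 < a -> 0 <= e a n <= 1.
Hypothesis e_le : forall a n, 0 < a -> e a n <= a * k n.
Hypothesis sum_fin :
  (\sum_(0 <= n <oo) (`|b n|%:E * Linf_norm mu (v n)) < +oo)%E.
Variables (F : M -> R) (G : R -> M -> R).
Hypothesis F_series : is_L2_series mu v b F.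
Hypothesis G_series :
  forall a, 0 < a -> is_L2_series mu v (fun n => (1 - e a n) * b n) (G a).

Let t n := fine (`|b n|%:E * Linf_norm mu (v n)).

Let tE n : (t n)%:E = (`|b n|%:E * Linf_norm mu (v n))%E.
Proof.
have term0 m : (0 <= `|b m|%:E * Linf_norm mu (v m))%E by rewrite mule_ge0 ?Lnorm_ge0.
rewrite fineK // ge0_fin_numE //; apply: le_lt_trans sum_fin.
rewrite (@nneseriesD1 R _ n xpredT) //; exact/leeDl/nneseries_ge0.
Qed.

Let t0 n : 0 <= t n.
Proof. by rewrite -lee_fin tE mule_ge0 ?Lnorm_ge0. Qed.

Let t_fin : (\sum_(0 <= n <oo) (t n)%:E < +oo)%E.
Proof. by under eq_eseriesr do rewrite tE. Qed.

Let k0 n : 0 <= k n.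
Proof.
have /andP[e0 _] := e01 1 n ltr01.
by rewrite -[k n]mul1r; exact: le_trans e0 (e_le 1 n ltr01).
Qed.

Let term_ae_le : \forall x \ae mu, forall n, `|b n * v n x| <= t n.
Proof.
apply: ae_foralln => n; apply: filterS (Linf_norm_ae_ge mu (v n)) => x vx.
by rewrite -lee_fin tE normrM EFinM lee_wpmul2l.
Qed.

Lemma damped_series_ae_le (a delta B : R) (K : nat) : 0 < a -> 0 < delta ->
  (forall N, \sum_(K <= n < N) t n <= B) ->
  \forall x \ae mu, `|F x - G a x| <= a * \sum_(n < K) k n * t n + B + delta.
Proof.
move=> a0 delta0 tailB; have [[mF _] cF] := F_series; have [[mG _] cG] := G_series a a0.
have mS (c : nat -> R) N : measurable_fun setT (fun x => \sum_(n < N) c n * v n x).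
  by apply: measurable_sum => n; apply: measurable_funM.
apply: (L2_limits_ae_close mu F (G a) (fun N x => \sum_(n < N) b n * v n x)
  (fun N x => \sum_(n < N) (1 - e a n) * b n * v n x) _ _ delta0 mF mG (mS b)
  (mS (fun n => (1 - e a n) * b n)) cF cG).
apply: filterS term_ae_le => x bv N; rewrite -sumrB.
under eq_bigr => n _.
  rewrite (_ : _ - _ = e a n * (b n * v n x)); last by ring.
  over.
apply: le_trans (ler_norm_sum _ _ _) _.
have ea0 n : 0 <= e a n by have /andP[] := e01 a n a0.
apply: (@le_trans _ _ (\sum_(n < N) e a n * t n)).
  apply: ler_sum => n _; rewrite normrM ger0_norm //; exact: ler_wpM2l.
apply: le_trans (sum_damped_le (e a) t (fun n => a * (k n * t n)) K N t0
  (fun n => e01 a n a0) _) _.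
  by move=> n; rewrite mulrA; apply: ler_wpM2r; [exact: t0 | exact: e_le].
by rewrite mulr_sumr lerD.
Qed.

Lemma damped_series_Linf_cvg0 :
  (Linf_norm mu (fun x => F x - G a x)%R @[a --> 0^'+] --> 0)%E.
Proof.
apply: cvge0_near_le => [a|eps eps0]; first exact: Lnorm_ge0.
have eps3 : 0 < eps / 3 by rewrite divr_gt0.
have [K tailK] := nneseries_tail_le _ _ t0 t_fin eps3.
pose Q := \sum_(n < K) k n * t n.
have Q1 : 0 < Q + 1 by rewrite ltr_wpDl // sumr_ge0 // => n _; rewrite mulr_ge0.
near=> a.
have a0 : 0 < a by near: a; exact: nbhs_right_gt.
have aQ : a * Q <= eps / 3.
  have : a < eps / 3 / (Q + 1) by near: a; apply: nbhs_right_lt; rewrite divr_gt0.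
  rewrite ltr_pdivlMr // => /ltW; apply: le_trans.
  by rewrite ler_pM2l // lerDl ler01.
apply: (Linf_norm_le mu); first exact: ltW.
apply: filterS (damped_series_ae_le a (eps / 3) (eps / 3) K a0 eps3 tailK) => x.
by move=> /le_trans; apply; rewrite -/Q; lra.
Unshelve. all: by end_near.
Qed.

End damped_series.

Theorem theorem4p3
  (R : realType) (d : measure_display) (M : measurableType d)
  (mu : {measure set M -> \bar R})
  (Y : completeNormedModType R) (ip : Y -> Y -> R)
  (A : (M -> R) -> Y)
  (sigma : nat -> R) (u : nat -> Y) (v : nat -> M -> R)
  (c : nat -> R) (c0 : R) :
  inner_product_on ip ->
  separable_space Y ->
  (* singular value decomposition of A : L^2(mu) -> Y *)
  ip_orthonormal ip u ->
  L2_orthonormal mu v ->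
  (forall n, 0 < sigma n) ->
  {homo sigma : m n / (m <= n)%N >-> n <= m} ->
  sigma @ \oo --> 0 ->
  (forall f, is_L2 mu f ->
     (fun N => \sum_(n < N) (sigma n * L2ip mu f (v n)) *: u n) @ \oo --> A f) ->
  (* weights *)
  0 < c0 -> (forall n, c0 <= c n) ->
  forall y : Y,
  (* y in U *)
  (\sum_(0 <= n <oo) ((`|ip y (u n)| / sigma n)%:E * Linf_norm mu (v n))
     < +oo)%E ->
  (* F represents A^dagger y, G alpha represents T^c_alpha y *)
  forall (F : M -> R) (G : R -> M -> R),
  is_L2_series mu v (fun n => ip y (u n) / sigma n) F ->
  (forall alpha, 0 < alpha ->
     is_L2_series mu v
       (fun n => sigma n / (sigma n ^+ 2 + alpha * c n) * ip y (u n)) (G alpha)) ->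
  (Linf_norm mu (fun x => F x - G alpha x)%R @[alpha --> 0^'+] --> 0%E)%E.
Proof.
move=> _ _ _ [vL2 _] sig0 _ _ _ c00 c0c y yU F G F_series G_series.
pose e a n := a * c n / (sigma n ^+ 2 + a * c n).
have cpos n : 0 < c n := lt_le_trans c00 (c0c n).
have den a n : 0 < a -> 0 < sigma n ^+ 2 + a * c n.
  by move=> a0; rewrite ltr_wpDl ?sqr_ge0 ?mulr_gt0.
have e01 a n : 0 < a -> 0 <= e a n <= 1.
  move=> a0; have ac0 : 0 <= a * c n by rewrite mulr_ge0 ?ltW.
  by rewrite divr_ge0 ?(ltW (den a n a0)) //= ler_pdivrMr ?den // mul1r lerDr sqr_ge0.
have e_le a n : 0 < a -> e a n <= a * (c n / sigma n ^+ 2).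
  move=> a0; have ac0 : 0 <= a * c n by rewrite mulr_ge0 ?ltW.
  by rewrite mulrA ler_wpM2l // lef_pV2 ?posrE ?den ?exprn_gt0 // lerDl.
apply: (damped_series_Linf_cvg0 mu v (fun n => ip y (u n) / sigma n) _ e
  (fun n => (vL2 n).1) e01 e_le _ F G F_series).
- by under eq_eseriesr => n _ do rewrite normrM normfV (gtr0_norm (sig0 n)).
- move=> a a0; have := G_series a a0; congr is_L2_series; apply: funext => n.
  have := den a n a0; have := sig0 n; rewrite /e => s0 d0.
  by field; rewrite !gt_eqF.
Qed.
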